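(* Let $k\geq 2$ and $1\leq i\leq k-1$ be integers, and for each $1\leq j\leq i-1$ let $S_j$ be any triangle-free $(k-j)$-critical graph without isolated vertices. Let $U=U(S_1,\dots,S_{i-1})$ (for $i=1$, $U$ is a single vertex, which is active). Then: (1) For every active vertex $u$ of $U$, $U$ can be properly $(k-1)$-colored so that at most $i$ different colors appear at active vertices, and among active vertices one of these colors (the $i$th) appears only at $u$. (2) In any proper $(k-1)$-coloring of $U$, at least $i$ different colors occur as colors of active vertices. (3) If any edge is removed from $U$, the resulting graph can be properly $(k-1)$-colored so that at most $i-1$ colors occur at active vertices.
   Context: A graph is $r$-critical if it has chromatic number $r$ and removing any edge allows it to be properly $(r-1)$-colored. Given graphs $S_1,\dots,S_t$, the graph $U(S_1,\dots,S_t)$ is constructed as follows: take the disjoint union of the graphs $S_1,\dots,S_t$ together with a new independent set $A=\prod_{m=1}^t V(S_m)$ (the set of active vertices; its elements are $t$-tuples), and for each $m$ join each vertex $v\in V(S_m)$ to every $u\in A$ whose $m$th coordinate equals $v$. (Edges inside each $S_m$ are kept.) In the paper this graph, with $S_j$ triangle-free $(k-j)$-critical, is denoted $U^{k-1}_{k-i+1}=U(k-1,k-2,\dots,k-i+1)$. *)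

From mathcomp Require Import all_boot.
Set Implicit Arguments. Unset Strict Implicit. Unset Printing Implicit Defensive.

Record sgraph := SGraph {
  svert :> finType;
  sadj : rel svert;
  sadj_sym : symmetric sadj;
  sadj_irr : irreflexive sadj }.

Definition proper_col (T : finType) (e : rel T) (c : nat) (f : T -> 'I_c) : Prop :=
  forall x y, e x y -> f x != f y.

Definition colorable (T : finType) (e : rel T) (c : nat) : Prop :=
  exists f : T -> 'I_c, proper_col e f.

Definition chromatic_eq (T : finType) (e : rel T) (r : nat) : Prop :=
  colorable e r /\ ~ colorable e r.-1.

Definition remove_edge (T : finType) (e : rel T) (x y : T) : rel T :=
  fun a b => e a b && ~~ (((a == x) && (b == y)) || ((a == y) && (b == x))).

Definition critical (r : nat) (G : sgraph) : Prop :=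
  chromatic_eq (sadj (s:=G)) r /\
  forall x y : G, sadj x y -> colorable (remove_edge (sadj (s:=G)) x y) r.-1.

Definition triangle_free (G : sgraph) : Prop :=
  forall x y z : G, ~ [&& sadj x y, sadj y z & sadj x z].

Definition no_isolated (G : sgraph) : Prop :=
  forall x : G, exists y : G, sadj x y.

(* The graph U(S_1,...,S_n): disjoint union of the S_j (left summand) and the
   independent set A = prod_j V(S_j) of active vertices (right summand). *)
Definition Uvert (n : nat) (S : 'I_n -> sgraph) : finType :=
  ({j : 'I_n & svert (S j)} + {dffun forall j : 'I_n, svert (S j)})%type.

Definition Uadj (n : nat) (S : 'I_n -> sgraph) : rel (Uvert S) :=
  fun x y =>
    match x, y with
    | inl p, inl q => (tag p == tag q) && sadj (tagged p) (tagged_as p q)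
    | inl p, inr a => a (tag p) == tagged p
    | inr a, inl p => a (tag p) == tagged p
    | inr _, inr _ => false
    end.

Definition active_colors (n : nat) (S : 'I_n -> sgraph) (c : nat)
    (f : Uvert S -> 'I_c) : {set 'I_c} :=
  [set f (inr a) | a : {dffun forall j : 'I_n, svert (S j)}].

From mathcomp Require Import all_boot zify.
Set Implicit Arguments. Unset Strict Implicit. Unset Printing Implicit Defensive.

(* Write n = i - 1 and c = k - 1, and colour the layer S_m of U with colours in
   [m, c), which its (c - m)-criticality allows. An active vertex a sees exactly
   one vertex a_m of each layer; give it the first m for which a_m does not have
   colour m (or n if there is none). Pinning colour m at u_m in every layer makes n
   the colour of u alone; after deleting an edge either one layer avoids its base
   colour altogether or u may reuse a base colour, so n colours suffice.
   Conversely, each layer S_m uses all but at most m colours, so if the active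
   vertices used at most n colours, one could pick one colour from each layer,
   realised at some a_m, so as to cover them all; the active vertex (a_m)_m would
   then have no colour left. *)

Definition nat_proper (T : finType) (e : rel T) (h : T -> nat) : Prop :=
  forall x y, e x y -> h x != h y.

Lemma uncolorable_card_image (T : finType) (e : rel T) (K : finType) (h : T -> K) r :
  (forall x y, e x y -> h x != h y) -> ~ colorable e r -> r < #|h @: T|.
Proof.
move=> h_proper not_col; rewrite ltnNge; apply/negP => card_le; apply: not_col.
have h_in x : h x \in enum (h @: T) by rewrite mem_enum imset_f.
have index_lt x : index (h x) (enum (h @: T)) < r.
  by apply: leq_trans card_le; rewrite cardE index_mem.
exists (fun x => Ordinal (index_lt x)) => x y exy; apply: contra (h_proper _ _ exy).
by move=> /eqP [/(index_inj (h x) (h_in x) (h_in y)) ->].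
Qed.

Lemma colorable_shift (T : finType) (e : rel T) r m :
  colorable e r -> exists h : T -> nat, (forall x, m <= h x < m + r) /\ nat_proper e h.
Proof.
move=> [f f_proper]; exists (fun x => m + f x); split=> [x|x y exy].
  by rewrite leq_addr ltn_add2l ltn_ord.
by rewrite eqn_add2l; apply: f_proper.
Qed.

Lemma colorable_gt0 (T : finType) (e : rel T) r (x : T) : colorable e r -> 0 < r.
Proof. by move=> [f _]; apply: leq_trans (ltn_ord (f x)). Qed.

Lemma remove_edgeC (T : finType) (e : rel T) x y : remove_edge e x y =2 remove_edge e y x.
Proof. by move=> a b; rewrite /remove_edge orbC. Qed.

Section CriticalColorings.
Variables (G : sgraph) (r : nat).
Hypothesis G_crit : critical r G.

Lemma critical_coloring_above m :
  exists h : G -> nat, (forall x, m <= h x < m + r) /\ nat_proper (sadj (s:=G)) h.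
Proof. exact: colorable_shift G_crit.1.1. Qed.

(* The edge-deleted graph needs one colour less, so it fits strictly above m. *)
Lemma critical_remove_edge_coloring_above m (x0 y0 : G) : sadj x0 y0 ->
  exists h : G -> nat,
    (forall x, m < h x < m + r) /\ nat_proper (remove_edge (sadj (s:=G)) x0 y0) h.
Proof.
move=> exy; have r_gt0 := colorable_gt0 x0 G_crit.1.1.
have [h [h_range h_proper]] := colorable_shift m.+1 (G_crit.2 _ _ exy).
by exists h; split=> // x; have := h_range x; lia.
Qed.

Lemma critical_coloring_pinned m (v : G) : no_isolated G ->
  exists h : G -> nat, [/\ h v = m, forall x, x != v -> m < h x,
    forall x, h x < m + r & nat_proper (sadj (s:=G)) h].
Proof.
move=> no_iso; have [w evw] := no_iso v.
have [h [h_range h_proper]] := critical_remove_edge_coloring_above m evw.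
exists (fun x => if x == v then m else h x); split=> [|x|x|x y exy /=].
- by rewrite eqxx.
- by move=> /negbTE ->; have /andP [] := h_range x.
- by case: eqP => _; have := h_range x; lia.
case: (eqVneq x v) => [exv|nxv]; case: (eqVneq y v) => [eyv|nyv].
- by move: exy; rewrite exv eyv sadj_irr.
- by have /andP [/ltn_eqF ->] := h_range y.
- by have /andP [/gtn_eqF ->] := h_range x.
by apply: h_proper; rewrite /remove_edge exy (negbTE nxv) (negbTE nyv) /= andbF.
Qed.

End CriticalColorings.

(* A greedy system of representatives: [T j] misses at most [j] points, so the
   last set can always absorb a point of [C] not yet covered. *)
Lemma choice_covering (K : finType) n (T : 'I_n -> {set K}) (C : {set K}) :
  (forall j, #|~: T j| <= j) -> (forall j, T j != set0) -> #|C| <= n ->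
  exists g : 'I_n -> K, (forall j, g j \in T j) /\ {subset C <= codom g}.
Proof.
elim: n T C => [|n IHn] T C T_miss T_nz C_le.
  have g0 : 'I_0 -> K by case.
  exists g0; split=> [[] //|x]; move: C_le; rewrite leqn0 cards_eq0 => /eqP ->.
  by rewrite inE.
pose T' j := T (lift ord_max j).
have T'_miss j : #|~: T' j| <= j.
  by have := T_miss (lift ord_max j); rewrite /= /bump (leqNgt n) ltn_ord.
have T'_nz j : T' j != set0 by apply: T_nz.
pose extend (g' : 'I_n -> K) x0 j := if unlift ord_max j is Some j' then g' j' else x0.
have extend_codom g' x0 x : x \in codom g' -> x \in codom (extend g' x0).
  by move=> /codomP [j' ->]; apply/codomP; exists (lift ord_max j'); rewrite /extend liftK.
have extend_in g' x0 : (forall j, g' j \in T' j) -> x0 \in T ord_max ->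
    forall j, extend g' x0 j \in T j.
  by move=> g'T x0T j; rewrite /extend; case: unliftP => [j' ->|->].
have [CT0 | [x /setIP [xC xT]]] := set_0Vmem (C :&: T ord_max).
  have C_le' : #|C| <= n.
    apply: leq_trans (T_miss ord_max); apply/subset_leq_card/subsetP => x xC.
    by rewrite inE; move: CT0 => /setP /(_ x); rewrite !inE xC /= => ->.
  have [g' [g'T g'C]] := IHn T' C T'_miss T'_nz C_le'.
  have /set0Pn [x0 x0T] := T_nz ord_max.
  by exists (extend g' x0); split=> [|x /g'C]; [apply: extend_in | apply: extend_codom].
have C_le' : #|C :\ x| <= n by move: C_le; rewrite (cardsD1 x C) xC.
have [g' [g'T g'C]] := IHn T' _ T'_miss T'_nz C_le'.
exists (extend g' x); split=> [|y yC]; first exact: extend_in.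
have [->|yx] := eqVneq y x.
  by apply/codomP; exists ord_max; rewrite /extend unlift_none.
by apply/extend_codom/g'C; rewrite !inE yx.
Qed.

Definition first_ord n (P : pred 'I_n) : nat := find P (enum 'I_n).

Lemma first_ord_le n (P : pred 'I_n) : first_ord P <= n.
Proof. by rewrite -[leqRHS](size_enum_ord n) find_size. Qed.

Lemma first_ord_leq n (P : pred 'I_n) j : P j -> first_ord P <= j.
Proof.
by move=> Pj; rewrite leqNgt; apply/negP => /(before_find j); rewrite nth_ord_enum Pj.
Qed.

Lemma first_ord_neq n (P : pred 'I_n) j : ~~ P j -> first_ord P != j.
Proof.
apply: contra => /eqP; rewrite /first_ord => first_j.
have has_P : has P (enum 'I_n) by rewrite has_find size_enum_ord first_j.
by have := nth_find j has_P; rewrite first_j nth_ord_enum.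
Qed.

Lemma first_ord_none n (P : pred 'I_n) : (forall j, ~~ P j) -> first_ord P = n.
Proof.
move=> noP; apply/eqP; rewrite eqn_leq first_ord_le leqNgt /=.
by rewrite -{2}(size_enum_ord n) -has_find; apply/hasPn => j _; apply: noP.
Qed.

Lemma card_set_ord_lt c t (C : {set 'I_c}) : (forall j, j \in C -> j < t) -> #|C| <= t.
Proof.
move=> C_lt; rewrite cardE -(size_map val) -[leqRHS](size_iota 0 t).
apply: uniq_leq_size => [|x /mapP [j]].
  by rewrite map_inj_uniq ?enum_uniq //; apply: val_inj.
by rewrite mem_enum => /C_lt j_lt ->; rewrite mem_iota.
Qed.

Section UColorings.
Variables (n c : nat) (S : 'I_n -> sgraph).
Local Notation act := {dffun forall j : 'I_n, svert (S j)}.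

Definition uvert (m : 'I_n) (v : S m) : Uvert S := inl (Tagged (fun j => svert (S j)) v).

Lemma uvert_eq m (v w : S m) : (uvert v == uvert w) = (v == w).
Proof. by rewrite [LHS]/eq_op /= eq_Tagged. Qed.

Lemma Uadj_uvert m (v w : S m) : Uadj (uvert v) (uvert w) = sadj v w.
Proof. by rewrite /Uadj /= eqxx tagged_asE. Qed.

Lemma remove_edge_uvert m (v0 w0 v w : S m) :
  remove_edge (@Uadj _ S) (uvert v0) (uvert w0) (uvert v) (uvert w)
  = remove_edge (sadj (s:=S m)) v0 w0 v w.
Proof. by rewrite /remove_edge Uadj_uvert !uvert_eq. Qed.

Lemma UadjP x y : Uadj x y ->
  [\/ exists m (v w : S m), [/\ x = uvert v, y = uvert w & sadj v w],
      exists (a : act) m, x = inr a /\ y = uvert (a m)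
    | exists (a : act) m, x = uvert (a m) /\ y = inr a].
Proof.
case: x y => [[m v]|a] [[m' w]|b] //= exy.
- move: exy => /andP [/eqP /= eq_m]; subst m'; rewrite tagged_asE => evw.
  by constructor 1; exists m, v, w.
- by move: exy => /eqP /= <-; constructor 3; exists b, m.
- by move: exy => /eqP /= <-; constructor 2; exists a, m'.
Qed.

Definition ucol (g : forall m, S m -> nat) (ca : act -> nat) (x : Uvert S) : nat :=
  match x with inl p => g (tag p) (tagged p) | inr a => ca a end.

Lemma ucol_proper (R : rel (Uvert S)) g ca : subrel R (@Uadj _ S) ->
  (forall m (v w : S m), R (uvert v) (uvert w) -> g m v != g m w) ->
  (forall a m, R (inr a) (uvert (a m)) || R (uvert (a m)) (inr a) -> ca a != g m (a m)) ->
  nat_proper R (ucol g ca).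
Proof.
move=> R_Uadj g_proper ca_proper x y Rxy.
have := R_Uadj _ _ Rxy; move: Rxy
  => /[swap] /UadjP [[m [v [w [-> -> _]]]] | [a [m [-> ->]]] | [a [m [-> ->]]]].
- exact: g_proper.
- by move=> Rxy; apply: ca_proper; rewrite Rxy.
- by move=> Rxy; rewrite eq_sym; apply: ca_proper; rewrite Rxy orbT.
Qed.

Lemma ord_coloring (R : rel (Uvert S)) (F : Uvert S -> nat) t :
  (forall x, F x < c) -> (forall a, F (inr a) < t) -> nat_proper R F ->
  exists f : Uvert S -> 'I_c,
    [/\ proper_col R f, #|active_colors f| <= t & forall x, f x = F x :> nat].
Proof.
move=> F_lt_c F_lt_t F_proper; exists (fun x => Ordinal (F_lt_c x)); split=> [x y Rxy||//].
- by rewrite -val_eqE; apply: F_proper.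
- by apply: card_set_ord_lt => _ /imsetP [a _ ->]; apply: F_lt_t.
Qed.

Definition first_mismatch (g : forall m, S m -> nat) (a : act) : nat :=
  first_ord (fun j => g j (a j) != j).

Lemma first_mismatch_proper (g : forall m, S m -> nat) :
  (forall (m : 'I_n) v, m <= g m v) -> forall a m, first_mismatch g a != g m (a m).
Proof.
move=> g_ge a m; have [g_am|g_am] := eqVneq (g m (a m)) m.
  by rewrite g_am first_ord_neq ?g_am ?eqxx.
rewrite neq_ltn (leq_ltn_trans (first_ord_leq g_am)) //.
by rewrite ltn_neqAle eq_sym g_am g_ge.
Qed.

Hypothesis S_crit : forall j : 'I_n, critical (c - j) (S j).

Lemma active_colors_gt (f : Uvert S -> 'I_c) :
  proper_col (@Uadj _ S) f -> n < #|active_colors f|.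
Proof.
move=> f_proper; rewrite ltnNge; apply/negP => card_le.
pose T j := [set f (uvert v) | v : S j].
have T_large (j : 'I_n) : (c - j).-1 < #|T j|.
  apply: uncolorable_card_image (S_crit j).1.2 => v w evw.
  by apply: f_proper; rewrite Uadj_uvert.
have T_miss (j : 'I_n) : #|~: T j| <= j.
  by have := cardsC (T j); rewrite card_ord; have := T_large j; lia.
have T_nz (j : 'I_n) : T j != set0 by rewrite -card_gt0 (leq_ltn_trans _ (T_large j)).
have [g [g_T g_cover]] := choice_covering T_miss T_nz card_le.
have /fin_all_exists [a0 a0_col] (j : 'I_n) : exists v : S j, g j = f (uvert v).
  by have /imsetP [v _ ->] := g_T j; exists v.
pose a : act := finfun a0.
have /g_cover /codomP [j fa] : f (inr a) \in active_colors f by apply: imset_f.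
have := f_proper (inr a) (uvert (a j)); rewrite /Uadj /= eqxx => /(_ isT).
by rewrite fa a0_col /a ffunE eqxx.
Qed.

Hypothesis lt_n_c : n < c.

Lemma layer_bound (j : 'I_n) : j + (c - j) = c.
Proof. by rewrite subnKC // ltnW // (ltn_trans (ltn_ord j)). Qed.

Lemma inner_edge_layer m0 (v0 w0 : S m0) : sadj v0 w0 -> forall m : 'I_n,
  exists h : S m -> nat,
    [/\ forall v, m <= h v < c, m = m0 -> forall v, m < h v
      & forall v w, remove_edge (@Uadj _ S) (uvert v0) (uvert w0) (uvert v) (uvert w) ->
                    h v != h w].
Proof.
move=> ev0w0 m; have [eq_m|ne_m] := eqVneq m m0.
  subst m; have [h [h_range h_proper]] :=
    critical_remove_edge_coloring_above (S_crit m0) m0 ev0w0.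
  exists h; split=> [v|_ v|v w]; last by rewrite remove_edge_uvert; apply: h_proper.
    by have := h_range v; rewrite layer_bound; lia.
  by have /andP [] := h_range v.
have [h [h_range h_proper]] := critical_coloring_above (S_crit m) m.
exists h; split=> [v|eq_m|v w /andP [+ _]].
- by rewrite -[c](layer_bound m); apply: h_range.
- by rewrite eq_m eqxx in ne_m.
- by rewrite Uadj_uvert; apply: h_proper.
Qed.

Lemma remove_inner_edge_coloring m0 (v0 w0 : S m0) : sadj v0 w0 ->
  exists f : Uvert S -> 'I_c,
    proper_col (remove_edge (@Uadj _ S) (uvert v0) (uvert w0)) f /\ #|active_colors f| <= n.
Proof.
move=> /inner_edge_layer /fin_all_exists [g g_spec].
have g_ge (m : 'I_n) v : m <= g m v by have [/(_ v) /andP []] := g_spec m.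
(* The layer [m0] never shows its base colour, so every active vertex
   mismatches at or before [m0]. *)
have ca_lt a : first_mismatch g a < n.
  apply: leq_ltn_trans (ltn_ord m0); apply: first_ord_leq.
  by have [_ /(_ erefl (a m0)) lt_m0 _] := g_spec m0; rewrite neq_ltn lt_m0 orbT.
have F_proper : nat_proper (remove_edge (@Uadj _ S) (uvert v0) (uvert w0))
                           (ucol g (first_mismatch g)).
  apply: ucol_proper => [x y /andP [] //|m v w|a m _]; last exact: first_mismatch_proper.
  by have [_ _] := g_spec m; apply.
have F_lt_c x : ucol g (first_mismatch g) x < c.
  case: x => [[m v]|a] /=; last exact: ltn_trans lt_n_c.
  by have [/(_ v) /andP []] := g_spec m.
have [f [f_proper f_card _]] := ord_coloring F_lt_c ca_lt F_proper.
by exists f.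
Qed.

Hypothesis S_noiso : forall j : 'I_n, no_isolated (S j).

Section Pinned.
Variable u : act.

Definition pinned_layer (m : 'I_n) (h : S m -> nat) : Prop :=
  [/\ h (u m) = m, forall v, v != u m -> m < h v,
      forall v, h v < c & nat_proper (sadj (s:=S m)) h].

Lemma pinned_layers : exists g : forall m, S m -> nat, forall m, pinned_layer (g m).
Proof.
apply: fin_all_exists => m.
have [h [h_um h_gt h_lt h_proper]] :=
  critical_coloring_pinned (S_crit m) m (u m) (@S_noiso m).
by exists h; split=> // v; rewrite -(layer_bound m).
Qed.

Section PinnedLayers.
Variable g : forall m, S m -> nat.
Arguments g : clear implicits.
Hypothesis g_pinned : forall m, pinned_layer (g m).

Lemma pinned_ge (m : 'I_n) v : m <= g m v.
Proof.
have [g_um g_gt _ _] := g_pinned m.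
by have [->|/g_gt/ltnW //] := eqVneq v (u m); rewrite g_um.
Qed.

Lemma first_mismatch_pinned : first_mismatch g u = n.
Proof. by apply: first_ord_none => m; have [-> _ _ _] := g_pinned m; rewrite negbK. Qed.

Lemma first_mismatch_lt w : w != u -> first_mismatch g w < n.
Proof.
move=> ne_wu; have [j ne_j] : exists j, w j != u j.
  apply/existsP; apply: contraR ne_wu => /existsPn eq_wu.
  by apply/eqP/ffunP => j; apply/eqP/negPn.
apply: leq_ltn_trans (ltn_ord j); apply: first_ord_leq.
by have [_ g_gt _ _] := g_pinned j; rewrite neq_ltn g_gt ?orbT.
Qed.

Lemma pinned_ucol_lt (ca : act -> nat) : (forall a, ca a < c) -> forall x, ucol g ca x < c.
Proof. by move=> ca_lt [[m v]|a] //=; have [_ _ ->] := g_pinned m. Qed.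

End PinnedLayers.

Lemma coloring_isolating_active : exists f : Uvert S -> 'I_c,
  [/\ proper_col (@Uadj _ S) f, #|active_colors f| <= n.+1
    & forall w, w != u -> f (inr w) != f (inr u)].
Proof.
have [g g_pinned] := pinned_layers.
have F_proper : nat_proper (@Uadj _ S) (ucol g (first_mismatch g)).
  apply: ucol_proper => [//|m v w|a m _].
    by rewrite Uadj_uvert; have [_ _ _] := g_pinned m; apply.
  exact: first_mismatch_proper (pinned_ge g_pinned) a m.
have ca_le a : first_mismatch g a < n.+1 by apply: first_ord_le.
have F_lt_c := @pinned_ucol_lt g g_pinned (first_mismatch g)
  (fun a => leq_ltn_trans (first_ord_le _) lt_n_c).
have [f [f_proper f_card f_val]] := ord_coloring F_lt_c ca_le F_proper.
exists f; split=> // w ne_wu; rewrite -val_eqE /= !f_val /= (first_mismatch_pinned g_pinned).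
by rewrite ltn_eqF ?(first_mismatch_lt g_pinned).
Qed.

Lemma remove_active_edge_coloring m0 : exists f : Uvert S -> 'I_c,
  proper_col (remove_edge (@Uadj _ S) (inr u) (uvert (u m0))) f /\ #|active_colors f| <= n.
Proof.
have [g g_pinned] := pinned_layers; set R := remove_edge _ _ _.
(* [u] takes the colour [m0] of its neighbour [u m0]: that edge is the deleted one. *)
pose ca a := if a == u then nat_of_ord m0 else first_mismatch g a.
have ca_lt a : ca a < n.
  by rewrite /ca; case: eqVneq => [_|/(first_mismatch_lt g_pinned) //]; apply: ltn_ord.
have F_proper : nat_proper R (ucol g ca).
  apply: ucol_proper => [x y /andP [] //|m v w /andP [+ _]|a m].
    by rewrite Uadj_uvert; have [_ _ _] := g_pinned m; apply.
  rewrite /ca; case: (eqVneq a u) => [->|_ _ /=].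
    2: exact: first_mismatch_proper (pinned_ge g_pinned) a m.
  have [-> _ _ _] := g_pinned m; have [->|ne_m] := eqVneq m m0.
    by rewrite /R /remove_edge !eqxx /= !andbF.
  by move=> _; apply: contra ne_m => /eqP eq_m; apply/eqP/val_inj.
have F_lt_c := pinned_ucol_lt g_pinned (fun a => ltn_trans (ca_lt a) lt_n_c).
have [f [f_proper f_card _]] := ord_coloring F_lt_c ca_lt F_proper.
by exists f.
Qed.

End Pinned.

Lemma remove_edge_coloring_few_active (x y : Uvert S) : Uadj x y ->
  exists f : Uvert S -> 'I_c,
    proper_col (remove_edge (@Uadj _ S) x y) f /\ #|active_colors f| <= n.
Proof.
move=> /UadjP [[m [v [w [-> -> evw]]]] | [a [m [-> ->]]] | [a [m [-> ->]]]].
- exact: remove_inner_edge_coloring.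
- exact: remove_active_edge_coloring.
- have [f [f_proper f_card]] := remove_active_edge_coloring a m.
  by exists f; split=> // p q; rewrite remove_edgeC; apply: f_proper.
Qed.

End UColorings.

Theorem lemma1 (k i : nat) (hk : 2 <= k) (hi1 : 1 <= i) (hik : i <= k - 1)
  (S : 'I_(i - 1) -> sgraph)
  (HS : forall j : 'I_(i - 1),
      triangle_free (S j) /\ critical (k - j.+1) (S j) /\ no_isolated (S j)) :
  (forall u : {dffun forall j : 'I_(i - 1), svert (S j)},
     exists f : Uvert S -> 'I_(k - 1),
       [/\ proper_col (@Uadj _ S) f,
           #|active_colors f| <= i &
           forall w, w != u -> f (inr w) != f (inr u)]) /\
  (forall f : Uvert S -> 'I_(k - 1),
     proper_col (@Uadj _ S) f -> i <= #|active_colors f|) /\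
  (forall x y : Uvert S, Uadj x y ->
     exists f : Uvert S -> 'I_(k - 1),
       proper_col (remove_edge (@Uadj _ S) x y) f /\
       #|active_colors f| <= i - 1).
Proof.
have lt_n_c : i - 1 < k - 1 by lia.
have S_crit (j : 'I_(i - 1)) : critical (k - 1 - j) (S j).
  by rewrite subnAC subn1 -subnS; have [_ []] := HS j.
have S_noiso (j : 'I_(i - 1)) : no_isolated (S j) by have [_ []] := HS j.
have succ_n : (i - 1).+1 = i by lia.
split; [|split].
- move=> u; have [f [f_proper f_card f_isol]] :=
    coloring_isolating_active S_crit lt_n_c S_noiso u.
  by exists f; rewrite succ_n in f_card.
- by move=> f /(active_colors_gt S_crit); rewrite succ_n.
- exact: remove_edge_coloring_few_active S_crit lt_n_c S_noiso.
Qed.
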